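(* Let $\mathscr{H}$ be a finite-dimensional complex Hilbert space and, for $i=1,\dots,n$, let $A_i=\{a^{(i)}_k\}_{k=1}^{m_i}$ be a tight frame of $\mathscr{H}$ with frame bound $\alpha_i>0$. Then $A_1,\dots,A_n$ are $s$-order incompatible if and only if $\sum_{i=1}^{n}n_{A_i}(|\varphi\rangle)\ge s$ for every nonzero $|\varphi\rangle\in\mathscr{H}$ with equality attained for some nonzero $|\varphi\rangle$, i.e. $\min_{|\varphi\rangle\neq0}\sum_{i=1}^{n}n_{A_i}(|\varphi\rangle)=s$.
   Context: A finite family $\{a_k\}_{k=1}^{m}\subset\mathscr{H}$ is a tight frame with frame bound $\alpha>0$ if $\sum_{k=1}^{m}|\langle x,a_k\rangle|^2=\alpha\|x\|^2$ for all $x\in\mathscr{H}$. Write $I_i=\{1,\dots,m_i\}$. The tight frames $A_1,\dots,A_n$ are called $s$-order incompatible, for an integer $s$, if: (1) for all nonempty $S_i\subseteq I_i$ ($i=1,\dots,n$) with $\sum_i|S_i|<s$ and every nonzero $x\in\mathscr{H}$, the equalities $\sum_{k\in S_i}|\langle x,a^{(i)}_k\rangle|^2=\alpha_i\|x\|^2$ do not hold simultaneously for all $i=1,\dots,n$; and (2) there exist nonempty $S_i\subseteq I_i$ with $\sum_i|S_i|=s$ and a nonzero $x\in\mathscr{H}$ such that these equalities hold for all $i$. For a vector $|\varphi\rangle$, $n_{A_i}(|\varphi\rangle)$ is the number of indices $k$ with $\langle a^{(i)}_k,\varphi\rangle\neq0$. *)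

(* H = C^d (standard inner product), C = R[i] with R : realType. *)
From HB Require Import structures.
From mathcomp Require Import all_boot all_order all_algebra.
From mathcomp Require Import complex.
From mathcomp Require Import reals.
Set Implicit Arguments. Unset Strict Implicit. Unset Printing Implicit Defensive.
Import Order.TTheory GRing.Theory Num.Theory.
Local Open Scope ring_scope.

Section Defs.
Variables (R : realType) (d : nat).
Local Notation C := R[i].

Definition inner (x y : 'rV[C]_d) : C := \sum_(j < d) x 0 j * (y 0 j)^*.

Definition sqnorm (x : 'rV[C]_d) : C := \sum_(j < d) `|x 0 j| ^+ 2.

Definition tight_frame (m : nat) (a : 'I_m -> 'rV[C]_d) (alpha : C) : Prop :=
  0 < alpha /\ forall x : 'rV[C]_d,
    \sum_(k < m) `|inner x (a k)| ^+ 2 = alpha * sqnorm x.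

Definition all_eq (n : nat) (m : 'I_n -> nat)
  (a : forall i : 'I_n, 'I_(m i) -> 'rV[C]_d) (alpha : 'I_n -> C)
  (S : forall i : 'I_n, {set 'I_(m i)}) (x : 'rV[C]_d) : Prop :=
  forall i : 'I_n, \sum_(k in S i) `|inner x (a i k)| ^+ 2 = alpha i * sqnorm x.

Definition s_order_incompatible (n : nat) (m : 'I_n -> nat)
  (a : forall i : 'I_n, 'I_(m i) -> 'rV[C]_d) (alpha : 'I_n -> C) (s : nat) : Prop :=
  (forall S : forall i : 'I_n, {set 'I_(m i)},
     (forall i, S i != set0) -> (\sum_(i < n) #|S i| < s)%N ->
     forall x : 'rV[C]_d, x != 0 -> ~ all_eq a alpha S x) /\
  (exists S : forall i : 'I_n, {set 'I_(m i)},
     (forall i, S i != set0) /\ (\sum_(i < n) #|S i|)%N = s /\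
     exists x : 'rV[C]_d, x != 0 /\ all_eq a alpha S x).

Definition nA (m : nat) (a : 'I_m -> 'rV[C]_d) (phi : 'rV[C]_d) : nat :=
  #|[set k : 'I_m | inner (a k) phi != 0]|.
End Defs.

(* Against a tight frame, [\sum_(k in S) |<x, a_k>|^2 = alpha ||x||^2] says that
   the terms outside [S] carry no weight, i.e. that [S] contains the support
   [{k | <a_k, x> <> 0}] of [x]; this support is nonempty for [x <> 0] because
   the total weight is [alpha ||x||^2 > 0].  So the admissible families [S] for
   a vector [x] are exactly the families of supersets of its supports, the least
   total size [\sum_i |S_i|] over them is [\sum_i n_{A_i}(x)], and the order of
   incompatibility is the minimum of that quantity over [x <> 0]. *)
From HB Require Import structures.
From mathcomp Require Import all_boot all_order all_algebra.
From mathcomp Require Import complex.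
From mathcomp Require Import reals.
Import Order.TTheory GRing.Theory Num.Theory.
Local Open Scope ring_scope.

Lemma psumr_in_eq_sum (V : numDomainType) (I : finType) (F : I -> V) (S : {set I}) :
  (forall k, 0 <= F k) ->
  \sum_(k in S) F k = \sum_k F k <-> [set k | F k != 0] \subset S.
Proof.
move=> F_ge0; rewrite [RHS](bigID (mem S)) /= -[LHS]addr0.
split=> [/addrI/esym F_out0 | /subsetP supp_sub].
- apply/subsetP=> k; rewrite inE; apply: contraR => kNS.
  by rewrite (psumr_eq0P (fun k _ => F_ge0 k) F_out0).
- apply/esym/congr1/big1 => k kNS; apply/eqP/negbNE.
  by apply: contra kNS => Fk; rewrite supp_sub ?inE.
Qed.

Section TightFrame.
Context {R : realType} {d : nat}.

Lemma conj_inner (x y : 'rV[R[i]]_d) : (inner x y)^* = inner y x.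
Proof.
rewrite /inner rmorph_sum; apply: eq_bigr => j _.
by rewrite rmorphM /= conjCK mulrC.
Qed.

Lemma sqnorm_eq0 (x : 'rV[R[i]]_d) : (sqnorm x == 0) = (x == 0).
Proof.
apply/idP/eqP=> [/eqP x0 | ->]; last first.
  by rewrite /sqnorm big1 // => j _; rewrite mxE normr0 expr0n.
apply/rowP=> j; rewrite mxE; apply/eqP.
rewrite -normr_eq0 -sqrf_eq0; apply/eqP.
by apply: (psumr_eq0P _ x0) => // k _; rewrite exprn_ge0.
Qed.

Definition frame_support {m : nat} (a : 'I_m -> 'rV[R[i]]_d) (x : 'rV[R[i]]_d) :=
  [set k | inner (a k) x != 0].

Context {m : nat} {a : 'I_m -> 'rV[R[i]]_d} {alpha : R[i]}.
Hypothesis frame_a : tight_frame a alpha.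

Lemma tight_frame_partial_sumP (x : 'rV[R[i]]_d) (S : {set 'I_m}) :
  \sum_(k in S) `|inner x (a k)| ^+ 2 = alpha * sqnorm x
  <-> frame_support a x \subset S.
Proof.
have [_ <-] := frame_a.
have -> : frame_support a x = [set k | `|inner x (a k)| ^+ 2 != 0].
  by apply/setP=> k; rewrite !inE sqrf_eq0 normr_eq0 -conj_inner conjC_eq0.
by apply: psumr_in_eq_sum => k; rewrite exprn_ge0.
Qed.

Lemma frame_support_neq0 (x : 'rV[R[i]]_d) : x != 0 -> frame_support a x != set0.
Proof.
apply: contraNN => /eqP supp0.
have [alpha_gt0 _] := frame_a.
have : \sum_(k in set0) `|inner x (a k)| ^+ 2 = alpha * sqnorm x.
  by apply/tight_frame_partial_sumP; rewrite supp0 sub0set.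
by rewrite big_set0 => /esym/eqP; rewrite mulf_eq0 (gt_eqF alpha_gt0) sqnorm_eq0.
Qed.

End TightFrame.

Section FrameFamily.
Context {R : realType} {d n : nat} {m : 'I_n -> nat}.
Context {a : forall i : 'I_n, 'I_(m i) -> 'rV[R[i]]_d} {alpha : 'I_n -> R[i]}.
Hypothesis frames_a : forall i : 'I_n, tight_frame (a i) (alpha i).

Local Notation support_size x := (\sum_(i < n) nA (a i) x)%N.

Lemma all_eqP (S : forall i, {set 'I_(m i)}) (x : 'rV[R[i]]_d) :
  all_eq a alpha S x <-> forall i, frame_support (a i) x \subset S i.
Proof.
by split=> eqS i; apply/(tight_frame_partial_sumP (frames_a i)); apply: eqS.
Qed.

Lemma all_eq_frame_support (x : 'rV[R[i]]_d) :
  all_eq a alpha (fun i => frame_support (a i) x) x.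
Proof. by apply/all_eqP. Qed.

Lemma all_eq_support_size (S : forall i, {set 'I_(m i)}) (x : 'rV[R[i]]_d) :
  all_eq a alpha S x -> (support_size x <= \sum_(i < n) #|S i|)%N.
Proof.
by move/all_eqP=> suppS; apply: leq_sum => i _; apply: subset_leq_card.
Qed.

Lemma no_small_witnessP (s : nat) :
  (forall S : forall i, {set 'I_(m i)},
     (forall i, S i != set0) -> (\sum_(i < n) #|S i| < s)%N ->
     forall x : 'rV[R[i]]_d, x != 0 -> ~ all_eq a alpha S x)
  <-> (forall x : 'rV[R[i]]_d, x != 0 -> (s <= support_size x)%N).
Proof.
split=> [no_small x x_neq0 | size_ge S _ S_small x x_neq0 eqS].
- rewrite leqNgt; apply/negP=> x_small.
  apply: (no_small _ _ x_small x x_neq0 (all_eq_frame_support x)) => i.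
  exact: frame_support_neq0.
- have := leq_trans (size_ge x x_neq0) (all_eq_support_size _ _ eqS).
  by rewrite leqNgt S_small.
Qed.

End FrameFamily.

Theorem mainTheorem6 (R : realType) (d n : nat) (m : 'I_n -> nat)
  (a : forall i : 'I_n, 'I_(m i) -> 'rV[R[i]]_d) (alpha : 'I_n -> R[i]) (s : nat) :
  (forall i : 'I_n, tight_frame (a i) (alpha i)) ->
  (s_order_incompatible a alpha s <->
   ((forall phi : 'rV[R[i]]_d, phi != 0 -> (s <= \sum_(i < n) nA (a i) phi)%N) /\
    (exists phi : 'rV[R[i]]_d, phi != 0 /\ (\sum_(i < n) nA (a i) phi)%N = s))).
Proof.
move=> frames_a; rewrite /s_order_incompatible (no_small_witnessP frames_a).
split=> -[size_ge].
- move=> [S [_ [size_S [x [x_neq0 eqS]]]]]; split=> //; exists x; split=> //.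
  apply/eqP; rewrite eqn_leq size_ge // andbT -size_S.
  exact: (all_eq_support_size frames_a S x eqS).
- move=> [x [x_neq0 size_x]]; split=> //.
  exists (fun i => frame_support (a i) x); split.
    by move=> i; apply: frame_support_neq0.
  by split=> //; exists x; split=> //; apply: all_eq_frame_support.
Qed.
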